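(* Let $G$ be a finite group, $p$ a prime, $P\in\mathrm{Syl}_p(G)$ and $x\in P$. Then $|x^G|\leq |x^G\cap P|\,\nu_p(G)$, with equality if and only if $x$ lies in a unique Sylow $p$-subgroup of $G$. In particular, if $x\in P$ lies in a unique Sylow $p$-subgroup of $G$, then $|x^G|\geq \nu_p(G)|x^P|$.
   Context: $x^G$ (resp. $x^P$) denotes the conjugacy class of $x$ in $G$ (resp. in $P$), $\mathrm{Syl}_p(G)$ the set of Sylow $p$-subgroups of $G$, and $\nu_p(G)=|\mathrm{Syl}_p(G)|$. *)

From mathcomp Require Import all_boot all_fingroup all_solvable.
Set Implicit Arguments. Unset Strict Implicit. Unset Printing Implicit Defensive.

From mathcomp Require Import all_boot all_fingroup all_solvable.
Set Implicit Arguments. Unset Strict Implicit. Unset Printing Implicit Defensive.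
Local Open Scope group_scope.

(* Count the pairs (y, Q) with y in x^G, Q a Sylow p-subgroup and y in Q in two
   ways.  Since the Sylow subgroups are conjugate and x^G is conjugation
   invariant, each Q contributes |x^G ∩ P|; since conjugation permutes the
   Sylow subgroups, each y contributes the number k of Sylow subgroups
   containing x.  Hence |x^G| k = |x^G ∩ P| ν_p(G), and k >= 1 with equality
   exactly in the uniqueness case; then x^P ⊆ x^G ∩ P gives the last bound. *)

Lemma double_count_setI (T I : finType) (A : {set T}) (S : {set I})
    (f : I -> {set T}) :
  (\sum_(i in S) #|A :&: f i| = \sum_(y in A) #|[set i in S | y \in f i]|)%N.
Proof.
transitivity (\sum_(i in S) \sum_(y in A) (y \in f i : nat))%N.
  apply: eq_bigr => i _; rewrite -big_mkcondr sum1_card.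
  by apply: eq_card => y; rewrite inE.
rewrite exchange_big; apply: eq_bigr => y _.
rewrite -big_mkcondr sum1_card.
by apply: eq_card => i; rewrite inE.
Qed.

Section SylowClassCount.

Variables (gT : finGroupType) (p : nat) (G : {group gT}).

Definition Syl_containing (y : gT) := [set Q in 'Syl_p(G) | y \in Q].

Lemma card_Syl_containing_leJ y g :
  g \in G -> (#|Syl_containing y| <= #|Syl_containing (y ^ g)|)%N.
Proof.
move=> Gg; rewrite -(card_imset _ (act_inj 'JG g)).
apply/subset_leq_card/subsetP => _ /imsetP[Q + ->]; rewrite !inE => /andP[sylQ yQ].
by rewrite /= pHallJ // memJ_conjg sylQ yQ.
Qed.

Lemma card_Syl_containingJ y g :
  g \in G -> #|Syl_containing (y ^ g)| = #|Syl_containing y|.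
Proof.
move=> Gg; apply/eqP; rewrite eqn_leq card_Syl_containing_leJ // andbT.
by rewrite -{2}(conjgK g y) card_Syl_containing_leJ ?groupV.
Qed.

Lemma sum_card_normal_setI_Syl (A : {set gT}) (P : {group gT}) :
    G \subset 'N(A) -> p.-Sylow(G) P ->
  (\sum_(Q in 'Syl_p(G)) #|A :&: Q| = #|A :&: P| * #|'Syl_p(G)|)%N.
Proof.
move=> nAG sylP; rewrite mulnC -sum_nat_const; apply: eq_bigr => Q; rewrite inE => sylQ.
have [g Gg ->] := Sylow_trans sylP sylQ.
by rewrite -{1}(normsP nAG g Gg) -conjIg cardJg.
Qed.

Lemma card_class_mul_Syl_containing (P : {group gT}) x :
    p.-Sylow(G) P ->
  (#|x ^: G| * #|Syl_containing x| = #|x ^: G :&: P| * #|'Syl_p(G)|)%N.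
Proof.
move=> sylP; have nCG : G \subset 'N(x ^: G) by apply/normsP; apply: classGidr.
rewrite -(sum_card_normal_setI_Syl nCG sylP) double_count_setI -sum_nat_const.
by apply: eq_bigr => _ /imsetP[g Gg ->]; rewrite card_Syl_containingJ.
Qed.

End SylowClassCount.

Theorem lemma2p6 (gT : finGroupType) (G P : {group gT}) (p : nat) (x : gT)
  (hp : prime p) (hP : P \in 'Syl_p(G)) (hx : x \in P) :
  [/\ (#|x ^: G| <= #|(x ^: G) :&: P| * #|'Syl_p(G)|)%N,
      (#|x ^: G| = #|(x ^: G) :&: P| * #|'Syl_p(G)|)%N <->
        #|[set Q in 'Syl_p(G) | x \in Q]| = 1%N
    & #|[set Q in 'Syl_p(G) | x \in Q]| = 1%N ->
        (#|'Syl_p(G)| * #|x ^: P| <= #|x ^: G|)%N].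
Proof.
have sylP : p.-Sylow(G) P by rewrite inE in hP.
have E := card_class_mul_Syl_containing x sylP.
rewrite -/(Syl_containing p G x) -E.
have k_gt0 : (0 < #|Syl_containing p G x|)%N.
  by apply/card_gt0P; exists P; rewrite inE hP hx.
have C_gt0 : (0 < #|x ^: G|)%N by apply/card_gt0P; exists x; apply: class_refl.
split; first by rewrite leq_pmulr.
  rewrite -{1}[#|x ^: G|]muln1; split=> [/eqP|->//].
  by rewrite eqn_pmul2l // => /eqP.
move=> k1; rewrite k1 muln1 in E; rewrite E mulnC leq_mul //.
by rewrite subset_leq_card // subsetI classS ?(pHall_sub sylP) ?class_subG.
Qed.
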